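(* For every positive integer $t$, let $s_{\max}(t)$ be the maximum size of a Sidon set in $\mathbb{F}_2^t$ and $s^{\mathrm{sf}}_{\max}(t)$ the maximum size of a sum-free Sidon set in $\mathbb{F}_2^t$. Then $s_{\max}(t) = s^{\mathrm{sf}}_{\max}(t)+1$.
   Context: $\mathbb{F}_2^t$ is the $t$-dimensional vector space over $\mathbb{F}_2$. A subset $M\subseteq\mathbb{F}_2^t$ is Sidon if $m_1+m_2\neq m_3+m_4$ for all pairwise distinct $m_1,m_2,m_3,m_4\in M$; it is sum-free if $m_1+m_2\neq m_3$ for all $m_1,m_2,m_3\in M$ (not necessarily distinct). *)

From mathcomp Require Import all_boot all_order all_algebra.
Set Implicit Arguments. Unset Strict Implicit. Unset Printing Implicit Defensive.
Import GRing.Theory.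
Local Open Scope ring_scope.

Definition F2vec (t : nat) := 'rV['F_2]_t.

Definition sidon (t : nat) (M : {set F2vec t}) : bool :=
  [forall m1 in M, forall m2 in M, forall m3 in M, forall m4 in M,
     [&& m1 != m2, m1 != m3, m1 != m4, m2 != m3, m2 != m4 & m3 != m4]
       ==> (m1 + m2 != m3 + m4)].

Definition sum_free (t : nat) (M : {set F2vec t}) : bool :=
  [forall m1 in M, forall m2 in M, forall m3 in M, m1 + m2 != m3].

Definition s_max (t : nat) : nat :=
  (\max_(M : {set F2vec t} | sidon M) #|M|)%N.

Definition s_sf_max (t : nat) : nat :=
  (\max_(M : {set F2vec t} | sidon M && sum_free M) #|M|)%N.

From mathcomp Require Import all_boot all_order all_algebra.
Import GRing.Theory.
Set Implicit Arguments. Unset Strict Implicit. Unset Printing Implicit Defensive.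

(** Sidon sets are translation invariant, so a Sidon set M can be moved to
    contain 0. In characteristic 2 the remaining elements then form a sum-free
    Sidon set: x + y = z with x, y, z nonzero would give x + y = z + 0, and the
    degenerate cases force one of the elements to be 0. Conversely, adding 0 to
    a sum-free Sidon set keeps it Sidon, since every new relation has the shape
    x + y = z + 0. *)

Local Open Scope ring_scope.

Lemma addmxx_pchar2 (R : nzSemiRingType) m n :
  2 \in [pchar R] -> forall A : 'M[R]_(m, n), A + A = 0.
Proof. by move=> pchar2 A; apply/matrixP => i j; rewrite !mxE addrr_pchar2. Qed.

Section SidonSets.

Variable t : nat.
Implicit Types (M S : {set F2vec t}) (a x y z : F2vec t).

Lemma sidonP M :
  reflect (forall m1 m2 m3 m4, m1 \in M -> m2 \in M -> m3 \in M -> m4 \in M ->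
             [&& m1 != m2, m1 != m3, m1 != m4, m2 != m3, m2 != m4 & m3 != m4] ->
             m1 + m2 != m3 + m4)
          (sidon M).
Proof.
apply: (iffP idP) => [sM m1 m2 m3 m4 h1 h2 h3 h4 | sM].
  by move: sM => /forall_inP/(_ m1 h1)/forall_inP/(_ m2 h2)
                 /forall_inP/(_ m3 h3)/forall_inP/(_ m4 h4)/implyP.
apply/forall_inP => m1 h1; apply/forall_inP => m2 h2.
apply/forall_inP => m3 h3; apply/forall_inP => m4 h4.
exact/implyP/sM.
Qed.

Lemma sum_freeP S :
  reflect (forall x y z, x \in S -> y \in S -> z \in S -> x + y != z)
          (sum_free S).
Proof.
apply: (iffP idP) => [fS x y z hx hy hz | fS].
  by move: fS => /forall_inP/(_ x hx)/forall_inP/(_ y hy)/forall_inP/(_ z hz).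
apply/forall_inP => x hx; apply/forall_inP => y hy; apply/forall_inP => z hz.
exact: fS.
Qed.

Lemma sidonS M S : S \subset M -> sidon M -> sidon S.
Proof.
move=> /subsetP sSM /sidonP sM; apply/sidonP => m1 m2 m3 m4 h1 h2 h3 h4.
exact: sM (sSM _ h1) (sSM _ h2) (sSM _ h3) (sSM _ h4).
Qed.

Lemma sidon_translate M a : sidon M -> sidon [set x + a | x in M].
Proof.
move=> /sidonP sM; apply/sidonP => ? ? ? ?.
move=> /imsetP[m1 h1 ->] /imsetP[m2 h2 ->] /imsetP[m3 h3 ->] /imsetP[m4 h4 ->].
rewrite !(inj_eq (addIr a)) addrACA [m3 + a + _]addrACA (inj_eq (addIr _)).
exact: sM.
Qed.

Lemma sum_free_sidonD0 M : 0 \in M -> sidon M -> sum_free (M :\ 0).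
Proof.
move=> h0 /sidonP sM; apply/sum_freeP => x y z.
rewrite !in_setD1 => /andP[x0 hx] /andP[y0 hy] /andP[z0 hz].
apply/eqP => xyz.
have [exy|nxy] := eqVneq x y.
  by move: z0; rewrite -xyz exy addmxx_pchar2 ?pchar_Fp ?eqxx.
have [exz|nxz] := eqVneq x z.
  by move: y0; rewrite -(addKr x y) xyz exz addNr eqxx.
have [eyz|nyz] := eqVneq y z.
  by move: x0; rewrite -(addrK y x) xyz eyz subrr eqxx.
move: (sM x y z 0 hx hy hz h0); rewrite xyz addr0 eqxx.
by rewrite nxy nxz x0 nyz y0 z0 => /(_ isT).
Qed.

Lemma sum_free_not0 S : sum_free S -> 0 \notin S.
Proof.
by move=> /sum_freeP fS; apply/negP => h0; move: (fS _ _ _ h0 h0 h0); rewrite addr0 eqxx.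
Qed.

Lemma sidon_setU0 S : sidon S -> sum_free S -> sidon (0 |: S).
Proof.
move=> /sidonP sS /sum_freeP fS; apply/sidonP => m1 m2 m3 m4; rewrite !in_setU1.
case/orP=> [/eqP->|h1]; case/orP=> [/eqP->|h2]; case/orP=> [/eqP->|h3];
  case/orP=> [/eqP->|h4]; rewrite ?eqxx ?andbF ?andFb //= => D;
  rewrite ?add0r ?addr0; by [apply: fS | rewrite eq_sym; apply: fS | apply: sS].
Qed.

Lemma s_max_le_s_sf_max : (s_max t <= s_sf_max t + 1)%N.
Proof.
apply/bigmax_leqP => M sM.
have [->|[a aM]] := set_0Vmem M; first by rewrite cards0.
pose N := [set x - a | x in M].
have sN : sidon N := sidon_translate (- a) sM.
have N0 : 0 \in N by apply/imsetP; exists a; rewrite ?subrr.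
have cardN : #|N| = #|M| by rewrite card_imset //; apply: addIr.
rewrite -cardN (cardsD1 0 N) N0 addnC leq_add2r.
apply: leq_bigmax_cond.
by rewrite (sidonS (subD1set N 0) sN) sum_free_sidonD0.
Qed.

Lemma s_sf_max_lt_s_max : (s_sf_max t < s_max t)%N.
Proof.
have sf0 : (0 < #|[pred S : {set F2vec t} | sidon S && sum_free S]|)%N.
  apply/card_gt0P; exists set0; rewrite inE.
  by apply/andP; split; [apply/sidonP | apply/sum_freeP] => x; rewrite inE.
have [S /andP[sS fS] maxS] := eq_bigmax_cond (fun S : {set F2vec t} => #|S|) sf0.
have -> : s_sf_max t = #|S| := maxS.
apply: leq_trans (leq_bigmax_cond _ (sidon_setU0 sS fS)).
by rewrite cardsU1 sum_free_not0.
Qed.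

End SidonSets.

Theorem proposition2p5 (t : nat) : (0 < t)%N -> s_max t = (s_sf_max t + 1)%N.
Proof.
move=> _; apply/eqP; rewrite eqn_leq s_max_le_s_sf_max addn1.
exact: s_sf_max_lt_s_max.
Qed.
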